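(* Let $K$ be a convex body in $\mathbb{R}^d$ and let $x,x'$ be regular boundary points of $K$ with exterior normal unit vectors $\xi,\xi'$ respectively. If $\xi\neq\xi'$, then the sets $-S(K,-\xi)+x$ and $-S(K,-\xi')+x'$ are disjoint.
   Context: A convex body is a compact convex set with nonempty interior. A boundary point is regular if $K$ has a unique support hyperplane there; its exterior normal unit vector $\xi$ satisfies $K\subset\{z:\langle z,\xi\rangle\le\langle x,\xi\rangle\}$. For a unit vector $\eta$, $S(K,\eta)$ is the set of points of $K$ maximizing $\langle\cdot,\eta\rangle$. *)

From HB Require Import structures.
From mathcomp Require Import all_boot all_order all_algebra.
From mathcomp Require Import all_classical all_reals all_analysis.
Set Implicit Arguments. Unset Strict Implicit. Unset Printing Implicit Defensive.
Import Order.TTheory GRing.Theory Num.Theory.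
Import numFieldNormedType.Exports.
Local Open Scope classical_set_scope.
Local Open Scope ring_scope.

Definition dotv (R : realType) (d : nat) (u v : 'rV[R]_d) : R :=
  \sum_(i < d) u ord0 i * v ord0 i.

Definition unit_vec (R : realType) (d : nat) (u : 'rV[R]_d) : Prop :=
  dotv u u = 1.

Definition convex_in (R : realType) (d : nat) (K : set 'rV[R]_d) : Prop :=
  forall x y (t : R), K x -> K y -> 0 <= t -> t <= 1 -> K (t *: x + (1 - t) *: y).

(* compact convex set with nonempty interior (topology of 'rV[R]_d is the
   product topology, i.e. the Euclidean one) *)
Definition convex_body (R : realType) (d : nat) (K : set 'rV[R]_d) : Prop :=
  compact K /\ convex_in K /\ (interior K !=set0).

Definition boundary_point (R : realType) (d : nat) (K : set 'rV[R]_d) x : Prop :=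
  K x /\ ~ (interior K) x.

Definition supp_normal (R : realType) (d : nat) (K : set 'rV[R]_d) x u : Prop :=
  u != 0 /\ forall z, K z -> dotv z u <= dotv x u.

Definition hyperplane_through (R : realType) (d : nat) (x u : 'rV[R]_d) :=
  [set z | dotv z u = dotv x u].

Definition regular_point (R : realType) (d : nat) (K : set 'rV[R]_d) x : Prop :=
  boundary_point K x /\
  forall u v, supp_normal K x u -> supp_normal K x v ->
    hyperplane_through x u = hyperplane_through x v.

Definition exterior_normal (R : realType) (d : nat) (K : set 'rV[R]_d) x xi : Prop :=
  unit_vec xi /\ forall z, K z -> dotv z xi <= dotv x xi.

Definition supp_set (R : realType) (d : nat) (K : set 'rV[R]_d) (eta : 'rV[R]_d) :=
  [set y | K y /\ forall z, K z -> dotv z eta <= dotv y eta].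

From HB Require Import structures.
From mathcomp Require Import all_boot all_order all_algebra.
From mathcomp Require Import all_classical all_reals all_analysis.
From mathcomp Require Import lra.
Import Order.TTheory GRing.Theory Num.Theory.
Import numFieldNormedType.Exports.
Local Open Scope classical_set_scope.
Local Open Scope ring_scope.

(** Write [z = x - y = x' - y'] with [y], [y'] minimising [<., xi>] and
  [<., xi'>] on [K].  Then [<x', xi> = <x, xi> + <y' - y, xi> >= <x, xi>], so
  [xi] is also an exterior normal at [x'].  By regularity at [x'] the unit
  vectors [xi] and [xi'] define the same supporting hyperplane there, so
  [xi' = -xi]; but then [K] lies in that hyperplane, contradicting the nonempty
  interior. *)

Section DotProduct.
Context {R : realType} {d : nat}.
Implicit Types (u v w : 'rV[R]_d) (a : R).

Lemma dotvC u v : dotv u v = dotv v u.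
Proof. by apply: eq_bigr => i _; rewrite mulrC. Qed.

Lemma dotvDl u v w : dotv (u + v) w = dotv u w + dotv v w.
Proof. by rewrite /dotv -big_split; apply: eq_bigr => i _; rewrite mxE mulrDl. Qed.

Lemma dotvZl a u w : dotv (a *: u) w = a * dotv u w.
Proof. by rewrite /dotv mulr_sumr; apply: eq_bigr => i _; rewrite mxE mulrA. Qed.

Lemma dotvNl u w : dotv (- u) w = - dotv u w.
Proof. by rewrite -scaleN1r dotvZl mulN1r. Qed.

Lemma dotvBl u v w : dotv (u - v) w = dotv u w - dotv v w.
Proof. by rewrite dotvDl dotvNl. Qed.

Lemma dotv0l w : dotv 0 w = 0.
Proof. by rewrite -(scale0r 0) dotvZl mul0r. Qed.

Lemma dotvZr a u w : dotv w (a *: u) = a * dotv w u.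
Proof. by rewrite dotvC dotvZl dotvC. Qed.

Lemma dotvBr u v w : dotv w (u - v) = dotv w u - dotv w v.
Proof. by rewrite !(dotvC w) dotvBl. Qed.

Lemma dotvNr u w : dotv w (- u) = - dotv w u.
Proof. by rewrite !(dotvC w) dotvNl. Qed.

Lemma dotvv_ge0 u : 0 <= dotv u u.
Proof. by apply: sumr_ge0 => i _; rewrite -expr2 sqr_ge0. Qed.

Lemma dotvv_eq0 u : (dotv u u == 0) = (u == 0).
Proof.
apply/idP/eqP => [|->]; last by rewrite dotv0l.
rewrite psumr_eq0 => [/allP u0|i _]; last by rewrite -expr2 sqr_ge0.
apply/rowP => j; rewrite mxE.
by have := u0 j (mem_index_enum _); rewrite /= mulf_eq0 orbb => /eqP.
Qed.

Lemma dotvv_gt0 u : (0 < dotv u u) = (u != 0).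
Proof. by rewrite lt_def dotvv_ge0 dotvv_eq0 andbT. Qed.

Lemma unit_vec_neq0 u : unit_vec u -> u != 0.
Proof. by rewrite -dotvv_gt0 => ->. Qed.

Lemma eq_hyperplane_through_unit {x u v} :
  unit_vec u -> unit_vec v ->
  hyperplane_through x u = hyperplane_through x v -> u = v \/ u = - v.
Proof.
move=> uu vv eq_uv; set c := dotv u v; set w := u - c *: v.
have wv : dotv w v = 0 by rewrite dotvBl dotvZl vv mulr1 subrr.
have wu : dotv w u = 0.
  have : hyperplane_through x v (x + w) by rewrite /hyperplane_through /= dotvDl wv addr0.
  by rewrite -eq_uv /hyperplane_through /= dotvDl => /eqP; rewrite addrC -subr_eq0 addrK => /eqP.
have /eqP : w = 0.
  by apply/eqP; rewrite -dotvv_eq0 {2}/w dotvBr dotvZr wu wv mulr0 subr0.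
rewrite subr_eq0 => /eqP u_cv.
have : c ^+ 2 == 1 by rewrite -uu u_cv dotvZl dotvZr vv mulr1 expr2.
by rewrite sqrf_eq1 => /orP[] /eqP c1; [left | right];
  rewrite u_cv c1 ?scale1r ?scaleN1r.
Qed.

End DotProduct.

Lemma interior_step {R : realType} {V : normedModType R} {K : set V} {p} v :
  interior K p -> exists2 t : R, 0 < t & K (p + t *: v).
Proof.
move=> /nbhs_ballP [e e0 Ke].
have v1_gt0 : 0 < `|v| + 1 by rewrite ltr_wpDl.
exists (e / (2 * (`|v| + 1))); first by rewrite divr_gt0 // mulr_gt0.
apply: Ke; rewrite -ball_normE /= opprD addNKr normrN normrZ.
rewrite ger0_norm; last by rewrite divr_ge0 ?mulr_ge0 ?ltW.
rewrite mulrAC ltr_pdivrMr ?mulr_gt0 // ltr_pM2l //.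
by have := normr_ge0 v; lra.
Qed.

Section SupportingHyperplanes.
Context {R : realType} {d : nat} {K : set 'rV[R]_d}.

Lemma exterior_normal_supp {x xi} : exterior_normal K x xi -> supp_normal K x xi.
Proof. by move=> [/unit_vec_neq0 xi0 Nx]. Qed.

Lemma interior_supp_normalN {p x u} :
  interior K p -> supp_normal K x u -> ~ supp_normal K x (- u).
Proof.
move=> Kp [u0 Nu] [_ NuN].
have [t t_gt0 Kpt] := interior_step u Kp.
have := Nu _ Kpt; have := NuN _ (interior_subset Kp).
rewrite !dotvNr lerN2 dotvDl dotvZl => le_xp le_ptx.
have : t * dotv u u <= 0 by rewrite -(lerD2l (dotv p u)) addr0 (le_trans le_ptx).
by rewrite pmulr_rle0 // leNgt dotvv_gt0 u0.
Qed.

Lemma exterior_normal_shift {x xi y y'} :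
  exterior_normal K x xi -> supp_set K (- xi) y -> K y' ->
  exterior_normal K (x + (y' - y)) xi.
Proof.
move=> [xi1 Nx] [_ Sy] Ky'; split=> // z Kz.
have := Sy _ Ky'; rewrite !dotvNr lerN2 => le_yy'.
by rewrite dotvDl dotvBl (le_trans (Nx _ Kz)) // lerDl subr_ge0.
Qed.

End SupportingHyperplanes.

Theorem lemma4p5 (R : realType) (d : nat) (K : set 'rV[R]_d)
    (x x' xi xi' : 'rV[R]_d) :
  convex_body K ->
  regular_point K x -> regular_point K x' ->
  exterior_normal K x xi -> exterior_normal K x' xi' ->
  xi <> xi' ->
  [set - y + x | y in supp_set K (- xi)] `&`
  [set - y + x' | y in supp_set K (- xi')] = set0.
Proof.
move=> [_ [_ [p Kp]]] _ [_ reg'] Nx Nx' xi_neq.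
apply/seteqP; split=> // _ [[y Sy <-]] [y' [Ky' _] eq_z].
have Nx'xi : exterior_normal K x' xi.
  have -> : x' = x + (y' - y).
    by rewrite -[x'](addNKr y') eq_z [RHS]addrCA (addrC (- y)).
  exact: exterior_normal_shift Nx Sy Ky'.
have [//|xi_opp] := eq_hyperplane_through_unit Nx'xi.1 Nx'.1
  (reg' _ _ (exterior_normal_supp Nx'xi) (exterior_normal_supp Nx')).
case: (interior_supp_normalN Kp (exterior_normal_supp Nx')).
by rewrite -xi_opp; apply: exterior_normal_supp.
Qed.
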